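(* Fix a partition $[n]=U\sqcup D$ and the associated map $\eta$ from $S_n$ to triangulations of the polygon $Q$ described below. Then the fibers of $\eta$ are exactly the congruence classes of a lattice congruence on the weak order on $S_n$.
   Context: $S_n$ is the set of permutations of $[n]=\{1,\dots,n\}$ in one-line notation $x=x_1\cdots x_n$. The weak order: $x\le y$ iff $I(x)\subseteq I(y)$ where $I(x)=\{(x_j,x_i): i<j,\ x_i>x_j\}$; it is a lattice. Let $Q$ be a convex polygon in $\mathbb R^2$ with vertices $v_0,v_1,\dots,v_{n+1}$ whose $x$-coordinates strictly increase with the index, with $v_0,v_{n+1}$ on the $x$-axis, such that $v_i$ has positive $y$-coordinate for $i\in U$ (''up indices'') and negative $y$-coordinate for $i\in D$ (''down indices''). A diagonal is a segment joining two non-adjacent vertices; a triangulation is a maximal set of pairwise non-crossing diagonals. For $x\in S_n$ define polygonal paths $\lambda_0(x),\dots,\lambda_n(x)$ from $v_0$ to $v_{n+1}$, each visiting its vertices in increasing order of index: $\lambda_0(x)$ visits $v_0$, the $v_i$ with $i\in D$, and $v_{n+1}$; for $i\ge1$, $\lambda_i(x)$ is obtained from $\lambda_{i-1}(x)$ by deleting the vertex $v_{x_i}$ if $x_i\in D$ and by adding the vertex $v_{x_i}$ if $x_i\in U$. Then $\eta(x)$ is the triangulation of $Q$ consisting of all diagonals of $Q$ that occur as edges of some $\lambda_i(x)$. A lattice congruence is an equivalence relation compatible with meets and joins. *)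

From mathcomp Require Import all_boot fingroup perm.
Set Implicit Arguments. Unset Strict Implicit. Unset Printing Implicit Defensive.

(* Conventions: [n] = {1..n} is represented by 'I_n, the element k of [n]
   being the ordinal of value k-1.  A permutation x in S_n is a
   {perm 'I_n}; its one-line notation is x_1 ... x_n with x_{i} = x (i-1).
   The polygon vertices v_0, ..., v_{n+1} are represented by 'I_n.+2
   (vertex v_j by the ordinal of value j). *)

Section Defs.
Variable n : nat.

Definition inv_set (x : {perm 'I_n}) : {set 'I_n * 'I_n} :=
  [set (x j, x i) | i in [set: 'I_n], j in [set: 'I_n] & (i < j) && (x j < x i)].

Definition weak_le (x y : {perm 'I_n}) : bool := inv_set x \subset inv_set y.

Definition vtx (k : 'I_n) : 'I_n.+2 := inord k.+1.
Definition v0 : 'I_n.+2 := ord0.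
Definition vlast : 'I_n.+2 := ord_max.

Variable D : {set 'I_n}.
Definition U : {set 'I_n} := ~: D.

(* a and b are consecutive vertices (a < b) of the path through the vertex
   set S visited in increasing order of index *)
Definition path_edge (S : {set 'I_n.+2}) (a b : 'I_n.+2) : bool :=
  [&& a < b, a \in S, b \in S & [forall c in S, ~~ ((a < c) && (c < b))]].

(* lower and upper boundary chains of Q: the boundary of the convex polygon Q
   consists of the lower chain v_0, (v_i)_{i in D}, v_{n+1} and the upper
   chain v_0, (v_i)_{i in U}, v_{n+1}, each in increasing order of index *)
Definition lower_chain : {set 'I_n.+2} := v0 |: (vlast |: (vtx @: D)).
Definition upper_chain : {set 'I_n.+2} := v0 |: (vlast |: (vtx @: U)).

Definition polygon_edge (a b : 'I_n.+2) : bool :=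
  path_edge lower_chain a b || path_edge upper_chain a b.

Definition is_diagonal (p : 'I_n.+2 * 'I_n.+2) : bool :=
  (p.1 < p.2) && ~~ polygon_edge p.1 p.2.

Fixpoint lam (x : {perm 'I_n}) (i : nat) : {set 'I_n.+2} :=
  match i with
  | 0 => lower_chain
  | i'.+1 =>
      match (insub i' : option 'I_n) with
      | Some j => let k := x j in
                  if k \in D then lam x i' :\ vtx k else vtx k |: lam x i'
      | None => lam x i'
      end
  end.

Definition eta (x : {perm 'I_n}) : {set 'I_n.+2 * 'I_n.+2} :=
  [set p | is_diagonal p &&
           [exists i : 'I_n.+1, path_edge (lam x i) p.1 p.2]].

End Defs.

Definition is_meet (T : finType) (le : rel T) (x y m : T) : Prop :=
  le m x /\ le m y /\ forall z, le z x -> le z y -> le z m.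
Definition is_join (T : finType) (le : rel T) (x y j : T) : Prop :=
  le x j /\ le y j /\ forall z, le x z -> le y z -> le j z.

Definition lattice_congruence (T : finType) (le : rel T) (r : T -> T -> Prop)
  : Prop :=
  [/\ (forall x, r x x),
      (forall x y, r x y -> r y x),
      (forall x y z, r x y -> r y z -> r x z),
      (forall x1 x2 y1 y2 m1 m2, r x1 y1 -> r x2 y2 ->
         is_meet le x1 x2 m1 -> is_meet le y1 y2 m2 -> r m1 m2) &
      (forall x1 x2 y1 y2 j1 j2, r x1 y1 -> r x2 y2 ->
         is_join le x1 x2 j1 -> is_join le y1 y2 j2 -> r j1 j2)].

From mathcomp Require Import all_boot fingroup perm zify.
Set Implicit Arguments. Unset Strict Implicit. Unset Printing Implicit Defensive.

(* For i < j put A = {i} ∪ (U ∩ (i,j)) and B = {j} ∪ (D ∩ (i,j)) ([arc_up],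
   [arc_down]), and let the test (i,j) ([arc_inv]) ask that every pair a < b
   with a ∈ A, b ∈ B be an inversion.
   The permutations passing a test form a principal filter of the weak order,
   so a meet passes exactly the tests passed by both arguments.  A test is
   decided by the edges of the paths λ_t(x): if (a, b) ∈ A × B is a
   non-inverted pair with b - a minimal and a is the p-th entry of x, then no
   vertex of λ_p(x) lies strictly between v_a and v_b, and the edge of λ_p(x)
   spanning them has its endpoints in two vertex sets determined by (i,j);
   conversely every such edge exhibits a non-inverted pair.  Hence the tests
   are functions of η(x).  Conversely, η is invariant under swapping adjacent
   entries x_s > x_(s+1) whenever some value c between them keeps its vertex on
   λ_(s+1); each fibre of η thus contains a permutation admitting no such swap,
   and for it the tests recover every inversion, hence the permutation.  So
   η(x) = η(y) iff x and y pass the same tests, which is compatible with meets;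
   joins follow by the symmetry x ↦ x w_0, which reverses the weak order and
   exchanges U and D. *)

Lemma ord_eqE m (a b : 'I_m) : (a == b) = (a == b :> nat).
Proof. by []. Qed.

Section Positions.
Variable n : nat.
Implicit Types (x y : {perm 'I_n}) (a b c : 'I_n).

Definition pos x (c : 'I_n) : 'I_n := (x^-1)%g c.

Lemma posK x : cancel (pos x) x. Proof. exact: permKV. Qed.
Lemma pos_permK x : cancel x (pos x). Proof. exact: permK. Qed.
Lemma pos_inj x : injective (pos x). Proof. exact: perm_inj. Qed.

Lemma pos_eqE x a b : (pos x a == b) = (a == x b).
Proof. by apply/eqP/eqP => [<- | ->]; rewrite ?posK ?pos_permK. Qed.

Lemma inv_setP x a b :
  ((a, b) \in inv_set x) = (a < b) && (pos x b < pos x a).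
Proof.
apply/idP/andP => [/imset2P [i j _] | [ab pba]].
  by rewrite !inE /= => /andP [ij xji] [-> ->]; rewrite !pos_permK.
by apply/imset2P; exists (pos x b) (pos x a); rewrite ?inE ?posK ?pba ?ab.
Qed.

Lemma weak_leP x y :
  reflect (forall a b, a < b -> pos x b < pos x a -> pos y b < pos y a)
          (weak_le x y).
Proof.
apply: (iffP subsetP) => [le_xy a b ab | le_xy [a b]].
  by move=> pba; have := le_xy (a, b); rewrite !inv_setP ab pba; apply.
by rewrite !inv_setP => /andP [ab pba]; rewrite ab le_xy.
Qed.

Lemma ord_incr_id (f : 'I_n -> 'I_n) : {homo f : p q / p < q} -> f =1 id.
Proof.
move=> f_incr.
have geq_f k (p : 'I_n) : p = k :> nat -> p <= f p.
  elim: k p => [p -> // | k IHk p pk].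
  have kn : k < n by rewrite -pk ltnW.
  have := IHk (Ordinal kn) erefl; have := f_incr (Ordinal kn) p.
  by rewrite pk /= => /(_ (ltnSn k)); lia.
have leq_f k (p : 'I_n) : p + k = n.-1 -> f p <= p.
  elim: k p => [|k IHk] p pk; first by have := ltn_ord (f p); lia.
  have pn : p.+1 < n by have := ltn_ord p; lia.
  have := IHk (Ordinal pn); have := f_incr p (Ordinal pn) (ltnSn p).
  by rewrite /=; lia.
move=> p; apply: val_inj; apply/eqP; rewrite eqn_leq (geq_f p p erefl) andbT.
by apply: (leq_f (n.-1 - p)); have := ltn_ord p; lia.
Qed.

Lemma inv_set_inj : injective (@inv_set n).
Proof.
move=> x y exy.
have invE a b : a < b -> (pos x b < pos x a) = (pos y b < pos y a).
  by move=> ab; have := inv_setP x a b; rewrite exy inv_setP ab.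
have incr : {homo pos y \o x : p q / p < q}.
  move=> p q pq /=; case: (ltngtP (x p) (x q)) => [xpq|xqp|/val_inj/perm_inj epq].
  - rewrite ltn_neqAle leqNgt -invE // !pos_permK ltnNge (ltnW pq) andbT.
    by rewrite val_eqE (inj_eq (@pos_inj y)) (inj_eq perm_inj) neq_ltn pq.
  - by rewrite -invE // !pos_permK.
  - by move: pq; rewrite epq ltnn.
by apply/permP => p; have /(congr1 y) := ord_incr_id incr p; rewrite posK.
Qed.

Section Ranking.
Variable key : 'I_n -> nat.
Hypothesis key_inj : injective key.

Let rank a := #|[set c | key c < key a]|.

Let rank_lt a : rank a < n.
Proof.
rewrite /rank -[n in _ < n]card_ord; apply: proper_card; apply/properP.
by split; [apply/subsetP | exists a; rewrite // inE ltnn].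
Qed.

Let rank_mono a b : key a < key b -> rank a < rank b.
Proof.
move=> ab; apply: proper_card; apply/properP; split.
  by apply/subsetP => c; rewrite !inE => ca; apply: ltn_trans ca ab.
by exists a; rewrite !inE // ltnn.
Qed.

Let rank_ord a : 'I_n := Ordinal (rank_lt a).

Let rank_ord_inj : injective rank_ord.
Proof.
move=> a b /(congr1 val) /= eab; apply: key_inj.
by case: (ltngtP (key a) (key b)) => // /rank_mono; rewrite eab ltnn.
Qed.

Lemma exists_perm_pos_key :
  exists al : {perm 'I_n}, forall a b, (pos al a < pos al b) = (key a < key b).
Proof.
exists (perm rank_ord_inj)^-1%g => a b; rewrite /pos invgK !permE /=.
apply/idP/idP; last exact: rank_mono.
case: (ltngtP (key a) (key b)) => // [/rank_mono ba | /key_inj ->]; last by rewrite ltnn.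
by rewrite ltnNge (ltnW ba).
Qed.

End Ranking.

End Positions.

Section Arcs.
Variables (n : nat) (D : {set 'I_n}).
Implicit Types (x y m : {perm 'I_n}) (a b c i j : 'I_n).

Definition arc_up i j a := (a == i) || (i < a < j) && (a \notin D).
Definition arc_down i j b := (b == j) || (i < b < j) && (b \in D).

Definition arc_inv x i j :=
  [forall a, forall b, [==> arc_up i j a, arc_down i j b, a < b => pos x b < pos x a]].

Lemma arc_invP x i j :
  reflect (forall a b, arc_up i j a -> arc_down i j b -> a < b -> pos x b < pos x a)
          (arc_inv x i j).
Proof.
apply: (iffP forallP) => [inv a b ua db ab | inv a].
  by have /forallP/(_ b) := inv a; rewrite ua db ab.
by apply/forallP => b; apply/implyP => ua; apply/implyP => db; apply/implyP; apply: inv.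
Qed.

Lemma arc_up_range i j a : i < j -> arc_up i j a -> i <= a < j.
Proof. by rewrite /arc_up => ij /orP [/eqP ->|/andP [] /andP []]; lia. Qed.

Lemma arc_down_range i j b : i < j -> arc_down i j b -> i < b <= j.
Proof. by rewrite /arc_down => ij /orP [/eqP ->|/andP [] /andP []]; lia. Qed.

Lemma arc_inv_ends x i j : i < j -> arc_inv x i j -> pos x j < pos x i.
Proof. by move=> ij /arc_invP; apply=> //; rewrite /arc_up /arc_down eqxx. Qed.

(* The one-line notation of a permutation realizing this key lists the c < i,
   the D-elements of (i,j) and j, then i and the U-elements of (i,j), then the
   c > j, each block increasingly: its inversions are exactly A × B. *)
Definition arc_key i j c : nat :=
  if (c < i) || (i < c < j) && (c \in D) || (c == j) then nat_of_ord c
  else if c == i then n else if c < j then n.+1 + c else (n + n).+2 + c.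

Lemma arc_key_inj i j : i < j -> injective (arc_key i j).
Proof.
move=> ij a b; rewrite /arc_key !ord_eqE; have := ltn_ord a; have := ltn_ord b.
by case: (a \in D); case: (b \in D); rewrite /=;
  do ! case: ifP => /=; move=> *; apply: val_inj => /=; lia.
Qed.

Lemma arc_key_lt i j a b : i < j -> a < b ->
  (arc_key i j b < arc_key i j a) = arc_up i j a && arc_down i j b.
Proof.
move=> ij ab; rewrite /arc_key /arc_up /arc_down !ord_eqE.
have := ltn_ord a; have := ltn_ord b.
by case: (a \in D); case: (b \in D); rewrite /=; do ! case: ifP => /=; move=> *; lia.
Qed.

Lemma arc_inv_principal i j : i < j ->
  exists al, forall y, weak_le al y = arc_inv y i j.
Proof.
move=> ij; have [al al_key] := exists_perm_pos_key (arc_key_inj ij).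
exists al => y; apply/weak_leP/arc_invP => [le_al a b ua db ab | inv a b ab].
  by apply: le_al => //; rewrite al_key arc_key_lt // ua db.
by rewrite al_key arc_key_lt // => /andP [ua db]; apply: inv.
Qed.

Lemma arc_inv_meet x y m i j : i < j -> is_meet (@weak_le n) x y m ->
  arc_inv m i j = arc_inv x i j && arc_inv y i j.
Proof.
move=> ij [mx [my m_max]]; have [al al_le] := arc_inv_principal ij.
rewrite -!al_le; apply/idP/andP => [al_m | [al_x al_y]]; last exact: m_max.
by split; apply: subset_trans al_m _.
Qed.

Lemma arc_inv_trans x a c b : a < c -> c < b ->
  arc_inv x a c -> arc_inv x c b -> arc_inv x a b.
Proof.
move=> ac cb /arc_invP inv_ac /arc_invP inv_cb; apply/arc_invP => a' b' ua db a'b'.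
have up_ac : a' < c -> arc_up a c a' by move: ua; rewrite /arc_up !ord_eqE; lia.
have up_cb : c <= a' -> arc_up c b a' by move: ua; rewrite /arc_up !ord_eqE; lia.
have down_ac : b' <= c -> arc_down a c b' by move: db; rewrite /arc_down !ord_eqE; lia.
have down_cb : c < b' -> arc_down c b b' by move: db; rewrite /arc_down !ord_eqE; lia.
have [b'c | cb'] := leqP b' c.
  exact: inv_ac (up_ac (leq_trans a'b' b'c)) (down_ac b'c) a'b'.
have [a'c | ca'] := ltnP a' c; last exact: inv_cb (up_cb ca') (down_cb cb') a'b'.
have ac_down : arc_down a c c by rewrite /arc_down eqxx.
have cb_up : arc_up c b c by rewrite /arc_up eqxx.
exact: ltn_trans (inv_cb _ _ cb_up (down_cb cb') cb') (inv_ac _ _ (up_ac a'c) ac_down a'c).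
Qed.

Lemma arc_inv_shrink_left x c a b : c < a -> a < b -> a \notin D ->
  arc_inv x c b -> arc_inv x a b.
Proof.
move=> ca ab aU /arc_invP inv; apply/arc_invP => a' b' ua db; apply: inv.
  have [-> | a'a] := eqVneq a' a; first by rewrite /arc_up ca ab aU orbT.
  by move: ua a'a; rewrite /arc_up !ord_eqE; lia.
by move: db; rewrite /arc_down !ord_eqE; lia.
Qed.

Lemma arc_inv_shrink_right x a b c : a < b -> b < c -> pos x b < pos x c ->
  arc_inv x a c -> arc_inv x a b.
Proof.
move=> ab bc pbc /arc_invP inv; apply/arc_invP => a' b' ua db a'b'.
have ua' : arc_up a c a' by move: ua; rewrite /arc_up !ord_eqE; lia.
case: (eqVneq b' b) a'b' => [-> a'b | b'b a'b'].
  have down_c : arc_down a c c by rewrite /arc_down eqxx.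
  exact: ltn_trans pbc (inv _ _ ua' down_c (ltn_trans a'b bc)).
by apply: inv => //; move: db b'b; rewrite /arc_down !ord_eqE; lia.
Qed.

End Arcs.

Section PathEdges.
Variables (n : nat) (S : {set 'I_n.+2}).
Implicit Types a b u v z : 'I_n.+2.

Lemma path_edge_gap a b z : path_edge S a b -> a < z < b -> z \notin S.
Proof.
case/and4P => _ _ _ /forallP /(_ z) /implyP gap azb.
by apply/negP => /gap; rewrite azb.
Qed.

Lemma path_edge_around u v : ord0 \in S -> ord_max \in S -> u < v ->
  (forall z, u < z < v -> z \notin S) ->
  exists a b, [/\ path_edge S a b, a <= u, v <= b,
                  (a == u) = (u \in S) & (b == v) = (v \in S)].
Proof.
move=> S0 Smax uv gap.
pose below := [pred z : 'I_n.+2 | (z \in S) && (z <= u)].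
pose above := [pred z : 'I_n.+2 | (z \in S) && (v <= z)].
have below0 : below ord0 by rewrite /= S0.
have above_max : above ord_max by rewrite /= Smax -ltnS ltn_ord.
case: (arg_maxnP (@nat_of_ord _) below0) => a /andP [aS au] a_max.
case: (arg_minnP (@nat_of_ord _) above_max) => b /andP [bS vb] b_min.
exists a, b; split => //.
- rewrite /path_edge aS bS (leq_ltn_trans au (leq_trans uv vb)) /=.
  apply/forallP => z; apply/implyP => zS; apply/negP => /andP [az zb].
  have [zu | uz] := leqP z u; first by have := a_max z; rewrite /= zS zu leqNgt az => /(_ isT).
  have [zv | vz] := ltnP z v; first by have := gap z; rewrite uz zv zS => /(_ isT).
  by have := b_min z; rewrite /= zS vz leqNgt zb => /(_ isT).
- apply/eqP/idP => [<- // | uS]; apply/eqP; rewrite ord_eqE eqn_leq au /=.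
  by apply: a_max; rewrite /= uS leqnn.
- apply/eqP/idP => [<- // | vS]; apply/eqP; rewrite ord_eqE eqn_leq vb andbT.
  by apply: b_min; rewrite /= vS leqnn.
Qed.

Lemma path_edge_split (S1 S2 : {set 'I_n.+2}) c a b : c \in S ->
  (forall z, z <= c -> (z \in S) = (z \in S1)) ->
  (forall z, c <= z -> (z \in S) = (z \in S2)) ->
  path_edge S a b -> path_edge S1 a b || path_edge S2 a b.
Proof.
move=> cS S1E S2E e_ab; have /and4P [ab aS bS _] := e_ab.
have [bc | cb] := leqP b c.
  have ac : a <= c by apply: ltnW (leq_trans ab bc).
  rewrite /path_edge ab -!S1E //=; apply/orP; left; rewrite aS bS /=.
  apply/forallP => z; apply/implyP => zS1; apply/negP => /andP [az zb].
  have zc : z <= c by apply: ltnW (leq_trans zb bc).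
  by move: zS1; rewrite -S1E // (negbTE (path_edge_gap e_ab _)) ?az.
have ca : c <= a.
  by rewrite leqNgt; apply/negP => ac; move: cS; rewrite (negbTE (path_edge_gap e_ab _)) ?ac.
rewrite /path_edge ab -!S2E ?(leq_trans ca (ltnW ab)) //=; apply/orP; right; rewrite aS bS /=.
apply/forallP => z; apply/implyP => zS2; apply/negP => /andP [az zb].
have cz : c <= z by apply: leq_trans ca (ltnW az).
by move: zS2; rewrite -S2E // (negbTE (path_edge_gap e_ab _)) ?az.
Qed.

End PathEdges.

Section Lambda.
Variables (n : nat) (D : {set 'I_n}).
Implicit Types (x : {perm 'I_n}) (k : 'I_n) (v : 'I_n.+2).

Definition on_lam x t k := if k \in D then t <= pos x k else pos x k < t.

Lemma vtxE k : vtx k = k.+1 :> nat.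
Proof. by rewrite /vtx inordK //; have := ltn_ord k; lia. Qed.

Lemma vtx_inj : injective (@vtx n).
Proof. by move=> k l /eqP; rewrite ord_eqE !vtxE eqSS => /eqP /val_inj. Qed.

Lemma vtx_neq0 k : (vtx k == v0 n) = false.
Proof. by rewrite ord_eqE vtxE. Qed.

Lemma vtx_neq_last k : (vtx k == vlast n) = false.
Proof. by rewrite ord_eqE vtxE /= eqSS ltn_eqF. Qed.

Variant vertex_spec : 'I_n.+2 -> Type :=
  | VertexFirst : vertex_spec (v0 n)
  | VertexLast : vertex_spec (vlast n)
  | VertexInner k : vertex_spec (vtx k).

Lemma vertexP v : vertex_spec v.
Proof.
case: v => [[|k] k_lt].
  by rewrite (_ : Ordinal _ = v0 n); [constructor | apply: val_inj].
have [k_n | k_n] := ltnP k n.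
  rewrite (_ : Ordinal _ = vtx (Ordinal k_n)); first by constructor.
  by apply/eqP; rewrite ord_eqE vtxE.
by rewrite (_ : Ordinal _ = vlast n); [constructor | apply/eqP; rewrite ord_eqE /=; lia].
Qed.

Lemma mem_lam_vtx x t k : (vtx k \in lam D x t) = on_lam x t k.
Proof.
elim: t => [|t IHt] /=.
  rewrite /lower_chain !in_setU1 vtx_neq0 vtx_neq_last mem_imset; last exact: vtx_inj.
  by rewrite /on_lam; case: (k \in D).
case: insubP => [j _ jt | ]; last first.
  rewrite -leqNgt => nt; rewrite IHt /on_lam.
  by have := ltn_ord (pos x k); case: (k \in D) => /= ?; lia.
have [-> | kj] := eqVneq k (x j).
  by rewrite /on_lam pos_permK jt; case: ifP => xjD; rewrite !inE ?eqxx ?xjD ?ltnSn ?ltnn.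
have pkj : pos x k != t :> nat by rewrite -jt -ord_eqE pos_eqE.
have -> : on_lam x t.+1 k = on_lam x t k by rewrite /on_lam; case: (k \in D); lia.
by rewrite -IHt; case: ifP => _; rewrite !inE (inj_eq vtx_inj) (negbTE kj).
Qed.

Lemma mem_lam_v0 x t : v0 n \in lam D x t.
Proof.
elim: t => [|t IHt] /=; first by rewrite !inE eqxx.
by case: insubP => // j _ _; case: ifP => _; rewrite !inE IHt ?orbT // eq_sym vtx_neq0.
Qed.

Lemma mem_lam_vlast x t : vlast n \in lam D x t.
Proof.
elim: t => [|t IHt] /=; first by rewrite !inE eqxx orbT.
by case: insubP => // j _ _; case: ifP => _; rewrite !inE IHt ?orbT // eq_sym vtx_neq_last.
Qed.

Lemma lam_step_out x (t : 'I_n) v :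
  v != vtx (x t) -> (v \in lam D x t.+1) = (v \in lam D x t).
Proof.
case: (vertexP v) => [|| k]; rewrite ?mem_lam_v0 ?mem_lam_vlast // (inj_eq vtx_inj) => kt.
have pkt : pos x k != t by rewrite pos_eqE.
by rewrite !mem_lam_vtx /on_lam; move: pkt; rewrite ord_eqE; case: (k \in D); lia.
Qed.

Lemma lam_upper x : lam D x n = upper_chain D.
Proof.
apply/setP => v; rewrite /upper_chain !inE.
case: (vertexP v) => [|| k]; rewrite ?mem_lam_v0 ?mem_lam_vlast ?eqxx ?orbT //.
rewrite mem_lam_vtx vtx_neq0 vtx_neq_last mem_imset; last exact: vtx_inj.
by rewrite /on_lam !inE; case: (k \in D); rewrite /= ?ltn_ord // leqNgt ltn_ord.
Qed.

End Lambda.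

Lemma eq_lam n (D1 D2 : {set 'I_n}) (x1 x2 : {perm 'I_n}) t1 t2 :
  (forall k, on_lam D1 x1 t1 k = on_lam D2 x2 t2 k) -> lam D1 x1 t1 = lam D2 x2 t2.
Proof.
move=> onE; apply/setP => v.
by case: (vertexP v) => [|| k]; rewrite ?mem_lam_v0 ?mem_lam_vlast ?mem_lam_vtx.
Qed.

Section Crossing.
Variables (n : nat) (D : {set 'I_n}).
Implicit Types (x y : {perm 'I_n}) (a b c i j : 'I_n) (u v : 'I_n.+2).

Definition lam_edge x u v := [exists t : 'I_n.+1, path_edge (lam D x t) u v].

Lemma lam_edgeE x u v :
  lam_edge x u v = (u < v) && (((u, v) \in eta D x) || polygon_edge D u v).
Proof.
apply/existsP/andP => [[t e_uv] | [uv]].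
  have uv : u < v by case/andP: e_uv.
  split=> //; rewrite inE /is_diagonal /= uv; case: (polygon_edge D u v) => //=.
  by rewrite orbF; apply/existsP; exists t.
case/orP => [| /orP [lower | upper]]; first by rewrite inE => /andP [_ /existsP].
  by exists ord0.
by exists ord_max; rewrite /= lam_upper.
Qed.

Definition edge_left i j u :=
  [exists k, [&& u == vtx k, k \notin D & i <= k < j]] || (i \in D) && (u <= i).
Definition edge_right i j v :=
  [exists k, [&& v == vtx k, k \in D & i < k <= j]] || (j \notin D) && (j.+1 < v).

Definition crossing x i j :=
  [exists u, exists v, [&& lam_edge x u v, edge_left i j u & edge_right i j v]].

Lemma edge_left_lt i j u : i < j -> edge_left i j u -> u < vtx j.
Proof.
move=> ij /orP [/existsP [k /and3P [/eqP -> _ /andP [_ kj]]] | /andP [_ ui]];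
  rewrite !vtxE //; lia.
Qed.

Lemma edge_right_gt i j v : i < j -> edge_right i j v -> vtx i < v.
Proof.
move=> ij /orP [/existsP [k /and3P [/eqP -> _ /andP [ik _]]] | /andP [_ jv]];
  rewrite !vtxE //; lia.
Qed.

Lemma edge_left_witness x (t : nat) i j u v : i < j ->
  path_edge (lam D x t) u v -> edge_left i j u -> vtx i < v ->
  exists a, [/\ arc_up D i j a, pos x a < t & (a == i) || (u == vtx a)].
Proof.
move=> ij e_uv /orP [/existsP [k /and3P [/eqP uk kU /andP [ik kj]]] | /andP [iD ui]] iv.
  exists k; split; rewrite ?uk ?eqxx ?orbT //.
    by move: kU; rewrite /arc_up ord_eqE; case: (k \in D) => //=; lia.
  by case/and4P: e_uv => _; rewrite uk mem_lam_vtx /on_lam (negbTE kU).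
exists i; split; rewrite ?eqxx //; first by rewrite /arc_up eqxx.
have : vtx i \notin lam D x t by apply: path_edge_gap e_uv _; rewrite iv vtxE ltnS ui.
by rewrite mem_lam_vtx /on_lam iD -ltnNge.
Qed.

Lemma edge_right_witness x (t : nat) i j u v : i < j ->
  path_edge (lam D x t) u v -> edge_right i j v -> u < vtx j ->
  exists b, [/\ arc_down D i j b, t <= pos x b & (b == j) || (v == vtx b)].
Proof.
move=> ij e_uv /orP [/existsP [k /and3P [/eqP vk kD /andP [ik kj]]] | /andP [jU jv]] uj.
  exists k; split; rewrite ?vk ?eqxx ?orbT //.
    by move: kD; rewrite /arc_down ord_eqE; case: (k \in D) => //=; lia.
  by case/and4P: e_uv => _ _; rewrite vk mem_lam_vtx /on_lam kD.
exists j; split; rewrite ?eqxx //; first by rewrite /arc_down eqxx.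
have : vtx j \notin lam D x t by apply: path_edge_gap e_uv _; rewrite uj vtxE jv.
by rewrite mem_lam_vtx /on_lam (negbTE jU) -leqNgt.
Qed.

Lemma crossing_arc_inv x i j : i < j -> crossing x i j -> ~~ arc_inv D x i j.
Proof.
move=> ij /existsP [u /existsP [v /and3P [/existsP [t e_uv] left right]]].
have [a [ua pa a_end]] := edge_left_witness ij e_uv left (edge_right_gt ij right).
have [b [db pb b_end]] := edge_right_witness ij e_uv right (edge_left_lt ij left).
have ab : a < b.
  have uv : u < v by case/andP: e_uv.
  have := arc_up_range ij ua; have := arc_down_range ij db.
  by move: a_end b_end uv; rewrite !ord_eqE !vtxE; lia.
by apply/negP => /arc_invP /(_ a b ua db ab); lia.
Qed.

Lemma arc_inv_gap x i j : i < j -> ~~ arc_inv D x i j ->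
  exists a b, [/\ arc_up D i j a, arc_down D i j b, a < b, pos x a < pos x b &
    forall c, a < c < b -> if c \in D then pos x c < pos x a else pos x b < pos x c].
Proof.
move=> ij /arc_invP not_inv.
pose bad := [pred p : 'I_n * 'I_n |
  [&& arc_up D i j p.1, arc_down D i j p.2, p.1 < p.2 & pos x p.1 < pos x p.2]].
have [p0 bad_p0] : exists p0, bad p0.
  have [/existsP // | /existsPn no_bad] := boolP [exists p, bad p].
  exfalso; apply: not_inv => a b ua db ab.
  have := no_bad (a, b); rewrite /= ua db ab /= -leqNgt leq_eqVlt => /orP [|//].
  by rewrite -ord_eqE (inj_eq (@pos_inj _ x)) => /eqP abE; move: ab; rewrite abE ltnn.
case: (arg_minnP (fun p : 'I_n * 'I_n => p.2 - p.1) bad_p0) => -[a b] /=.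
case/and4P=> ua db ab pab gap_min; exists a, b; split=> // c /andP [ac cb].
have [ia aj] := andP (arc_up_range ij ua); have [ib bj] := andP (arc_down_range ij db).
case: ifP => cD.
  have dc : arc_down D i j c by rewrite /arc_down cD ord_eqE andbT; lia.
  have pca : pos x c != pos x a by rewrite (inj_eq (@pos_inj _ x)) ord_eqE gtn_eqF.
  by have := gap_min (a, c); rewrite /= ua dc ac /=; move: pca; rewrite ord_eqE; lia.
have uc : arc_up D i j c by rewrite /arc_up cD ord_eqE andbT; lia.
have pcb : pos x c != pos x b by rewrite (inj_eq (@pos_inj _ x)) ord_eqE ltn_eqF.
by have := gap_min (c, b); rewrite /= uc db cb /=; move: pcb; rewrite ord_eqE; lia.
Qed.

Lemma edge_left_of_up i j a u : i < j -> arc_up D i j a ->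
  u <= vtx a -> (u == vtx a) = (a \notin D) -> edge_left i j u.
Proof.
move=> ij ua ua_le u_end; have [ia aj] := andP (arc_up_range ij ua).
case: (boolP (a \in D)) => [aD | aU].
  have ai : a = i by apply/eqP; move: ua; rewrite /arc_up aD andbF orbF.
  have ua_neq : u != vtx a by rewrite u_end aD.
  apply/orP; right; rewrite -ai aD /=.
  by move: ua_le ua_neq; rewrite ord_eqE vtxE; lia.
have -> : u = vtx a by apply/eqP; rewrite u_end aU.
by apply/orP; left; apply/existsP; exists a; rewrite eqxx aU ia aj.
Qed.

Lemma edge_right_of_down i j b v : i < j -> arc_down D i j b ->
  vtx b <= v -> (v == vtx b) = (b \in D) -> edge_right i j v.
Proof.
move=> ij db vb_le v_end; have [ib bj] := andP (arc_down_range ij db).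
case: (boolP (b \in D)) => [bD | bU].
  have -> : v = vtx b by apply/eqP; rewrite v_end bD.
  by apply/orP; left; apply/existsP; exists b; rewrite eqxx bD ib bj.
have bj' : b = j by apply/eqP; move: db; rewrite /arc_down (negbTE bU) andbF orbF.
have vb_neq : v != vtx b by rewrite v_end (negbTE bU).
apply/orP; right; rewrite -bj' bU /=.
by move: vb_le vb_neq; rewrite ord_eqE vtxE; lia.
Qed.

Lemma arc_inv_crossing x i j : i < j -> ~~ arc_inv D x i j -> crossing x i j.
Proof.
move=> ij /(arc_inv_gap ij) [a [b [ua db ab pab gap]]].
have t_lt : (pos x a).+1 < n.+1 by rewrite ltnS.
pose t := Ordinal t_lt.
have on_a : on_lam D x t a = (a \notin D) by rewrite /on_lam /=; case: (a \in D); lia.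
have on_b : on_lam D x t b = (b \in D) by rewrite /on_lam /=; case: (b \in D); lia.
have no_mid (z : 'I_n.+2) : vtx a < z < vtx b -> z \notin lam D x t.
  case: (vertexP z) => [|| c] /andP [az zb].
  - by move: az; rewrite vtxE.
  - by move: zb; rewrite vtxE /=; have := ltn_ord b; lia.
  move: az zb; rewrite !vtxE !ltnS mem_lam_vtx /on_lam /= => ac cb.
  by have := gap c; rewrite ac cb => /(_ isT); case: (c \in D); lia.
have ab_vtx : vtx a < vtx b by rewrite !vtxE.
have [u [v [e_uv ua_le vb_le a_end b_end]]] :=
  path_edge_around (mem_lam_v0 D x t) (mem_lam_vlast D x t) ab_vtx no_mid.
apply/existsP; exists u; apply/existsP; exists v; apply/and3P; split.
- by apply/existsP; exists t.
- by apply: edge_left_of_up ij ua ua_le _; rewrite a_end mem_lam_vtx on_a.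
- by apply: edge_right_of_down ij db vb_le _; rewrite b_end mem_lam_vtx on_b.
Qed.

Lemma arc_invE x i j : i < j -> arc_inv D x i j = ~~ crossing x i j.
Proof.
move=> ij; apply/idP/idP => [inv | no_cross].
  by apply: contraL inv; apply: crossing_arc_inv.
exact: contraR (arc_inv_crossing ij) no_cross.
Qed.

Lemma arc_inv_eta x y i j : i < j -> eta D x = eta D y ->
  arc_inv D x i j = arc_inv D y i j.
Proof.
move=> ij exy; rewrite !arc_invE //; congr (~~ _).
by apply: eq_existsb => u; apply: eq_existsb => v; rewrite !lam_edgeE exy.
Qed.

End Crossing.

Lemma tperm_valE n (s s' p : 'I_n) :
  tperm s s' p = (if p == s then s' else if p == s' then s else p) :> nat.
Proof.
case: tpermP => [-> | -> | /eqP/negPf-> /eqP/negPf->]; rewrite ?eqxx //.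
by case: eqP => [->|].
Qed.

Section AdjacentTransposition.
Variables (n : nat) (s s' : 'I_n).
Hypothesis ss' : s' = s.+1 :> nat.
Implicit Types p q : 'I_n.

Lemma tperm_adj_lt p q : ~~ ((p == s) && (q == s')) -> ~~ ((p == s') && (q == s)) ->
  (tperm s s' p < tperm s s' q) = (p < q).
Proof. by rewrite !tperm_valE !ord_eqE; move: ss'; do ![case: eqP => ? /=]; lia. Qed.

Lemma tperm_adj_leq (t : nat) p : t != s' -> (t <= tperm s s' p) = (t <= p).
Proof. by rewrite tperm_valE !ord_eqE; move: ss'; do ![case: eqP => ? /=]; lia. Qed.

End AdjacentTransposition.

Section Contraction.
Variables (n : nat) (D : {set 'I_n}).
Implicit Types (x y z : {perm 'I_n}) (a b c i j k : 'I_n) (u v w : 'I_n.+2).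

Lemma pos_tperm x (s s' : 'I_n) k : pos (tperm s s' * x)%g k = tperm s s' (pos x k).
Proof. by rewrite /pos invMg tpermV permM. Qed.

Lemma lam_edge_split z (s s' : 'I_n) c u v : s' = s.+1 :> nat ->
  vtx c \in lam D z s' -> (z s' < c < z s) || (z s < c < z s') ->
  path_edge (lam D z s') u v -> path_edge (lam D z s) u v || path_edge (lam D z s'.+1) u v.
Proof.
move=> ss' cS zc e_uv.
have agree (t : 'I_n) w : (w <= vtx c < vtx (z t)) || (vtx (z t) < vtx c <= w) ->
    (w \in lam D z t.+1) = (w \in lam D z t).
  by move=> wc; apply: lam_step_out; apply: contraTneq wc => ->; lia.
have lam_s' : lam D z s' = lam D z s.+1 by rewrite ss'.
case/orP: zc => /andP [z_s'c z_cs].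
  apply: path_edge_split cS _ _ e_uv => w wc.
    by rewrite lam_s' agree //; move: wc z_cs; rewrite !vtxE; lia.
  by rewrite agree //; move: wc z_s'c; rewrite !vtxE; lia.
rewrite orbC; apply: path_edge_split cS _ _ e_uv => w wc.
  by rewrite agree //; move: wc z_s'c; rewrite !vtxE; lia.
by rewrite lam_s' agree //; move: wc z_cs; rewrite !vtxE; lia.
Qed.

Definition contraction x (s s' c : 'I_n) :=
  [&& s' == s.+1 :> nat, x s' < c, c < x s &
      if c \in D then s' < pos x c else pos x c < s].

Section Contract.
Variables (x : {perm 'I_n}) (s s' c : 'I_n).
Hypothesis contr : contraction x s s' c.
Let x' := (tperm s s' * x)%g.

Let ss' : s' = s.+1 :> nat. Proof. by case/and4P: contr => /eqP. Qed.

Lemma lam_contract (t : nat) : t != s' -> lam D x' t = lam D x t.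
Proof.
move=> ts'; apply: eq_lam => k; rewrite /on_lam pos_tperm.
by case: (k \in D); rewrite ?ltnNge tperm_adj_leq.
Qed.

Let mem_lam_c : vtx c \in lam D x s' /\ vtx c \in lam D x' s'.
Proof.
have /and4P [_ xs'c cxs pc] := contr.
have pos_c : pos x' c = pos x c.
  rewrite pos_tperm tpermD //; apply/eqP => /(congr1 x); rewrite posK => xc.
    by move: cxs; rewrite xc ltnn.
  by move: xs'c; rewrite xc ltnn.
by rewrite !mem_lam_vtx /on_lam pos_c; move: pc; case: (c \in D); lia.
Qed.

(* Only λ_(s') changes.  The vertex of c lies on λ_(s') for both x and x' and
   separates the vertices of x s' and x s, so every edge of λ_(s') is an edge
   of λ_s or of λ_(s'+1), which x and x' share. *)
Lemma eta_contract : eta D x' = eta D x.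
Proof.
have /and4P [_ xs'c cxs _] := contr.
have [cx cx'] := mem_lam_c.
have transfer z y : (forall t : nat, t != s' -> lam D z t = lam D y t) ->
    vtx c \in lam D z s' -> (z s' < c < z s) || (z s < c < z s') ->
    forall u v, lam_edge D z u v -> lam_edge D y u v.
  move=> zy cS zc u v /existsP [t e_t]; apply/existsP.
  have [ts' | ts'] := eqVneq (t : nat) s'; last by exists t; rewrite -zy.
  have s_lt : s < n.+1 by rewrite ltnS ltnW.
  have s'_lt : s'.+1 < n.+1 by rewrite ltnS.
  move: e_t; rewrite ts' => /(lam_edge_split ss' cS zc) /orP [e | e].
    by exists (Ordinal s_lt); rewrite -zy //= ss' ltn_eqF.
  by exists (Ordinal s'_lt); rewrite -zy //= gtn_eqF.
apply/setP => -[u v]; rewrite !inE /=; congr (_ && _); apply/idP/idP.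
  apply: (transfer x' x) => //; first exact: lam_contract.
  by rewrite !permM tpermL tpermR xs'c cxs orbT.
apply: (transfer x x') => //; first by move=> t /lam_contract ->.
by rewrite xs'c cxs.
Qed.

Lemma inv_set_contract : inv_set x' \proper inv_set x.
Proof.
have /and4P [_ xs'c cxs _] := contr.
have xs'_xs : x s' < x s := ltn_trans xs'c cxs.
have invE a b : a < b -> ~~ ((a == x s') && (b == x s)) ->
    (pos x' b < pos x' a) = (pos x b < pos x a).
  move=> ab ab_ne; rewrite !pos_tperm tperm_adj_lt // !pos_eqE 1?andbC //.
  by apply/negP => /andP [/eqP bE /eqP aE]; move: ab; rewrite aE bE ltnNge ltnW.
apply/properP; split.
  apply/subsetP => -[a b]; rewrite !inv_setP => /andP [ab pba]; rewrite ab /=.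
  have [/andP [/eqP -> /eqP ->] | ab_ne] := boolP ((a == x s') && (b == x s)).
    by rewrite !pos_permK ss'.
  by rewrite -invE.
exists (x s', x s); first by rewrite inv_setP xs'_xs !pos_permK ss' ltnSn.
by rewrite inv_setP xs'_xs /= !pos_tperm !pos_permK tpermL tpermR ss' ltnNge leqnSn.
Qed.

End Contract.

Definition sortable x := [forall s, forall s', forall c, ~~ contraction x s s' c].

Lemma exists_sortable x : exists2 x0, sortable x0 & eta D x0 = eta D x.
Proof.
have [m] := ubnP #|inv_set x|; elim: m x => // m IHm x x_lt.
have [sx | /forallPn [s /forallPn [s' /forallPn [c /negPn contr]]]] := boolP (sortable x).
  by exists x.
have [|x0 sx0 ex0] := IHm (tperm s s' * x)%g.
  by apply: leq_trans (proper_card (inv_set_contract contr)) _.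
by exists x0; rewrite // ex0 (eta_contract contr).
Qed.

Lemma sortable_between x (s s' : 'I_n) c : sortable x -> s' = s.+1 :> nat ->
  x s' < c < x s -> if c \in D then pos x c < s else s' < pos x c.
Proof.
move=> sx ss' /andP [xs'c cxs].
have /forallP/(_ s)/forallP/(_ s')/forallP/(_ c) := sx.
have pcs : pos x c != s by rewrite pos_eqE; apply: contraTneq cxs => ->; rewrite ltnn.
have pcs' : pos x c != s' by rewrite pos_eqE; apply: contraTneq xs'c => ->; rewrite ltnn.
rewrite /contraction ss' eqxx xs'c cxs /=.
by move: pcs pcs'; rewrite !ord_eqE ss'; case: (c \in D); lia.
Qed.

Lemma sortable_adj_arc x (s s' : 'I_n) : sortable x -> s' = s.+1 :> nat ->
  x s' < x s -> arc_inv D x (x s') (x s).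
Proof.
move=> sx ss' xs'_xs; apply/arc_invP => a b ua db ab.
have pa : s' <= pos x a.
  case/orP: ua => [/eqP -> | /andP [mid aU]]; first by rewrite pos_permK.
  by have := sortable_between sx ss' mid; rewrite (negbTE aU) => /ltnW.
have pb : pos x b <= s.
  case/orP: db => [/eqP -> | /andP [mid bD]]; first by rewrite pos_permK.
  by have := sortable_between sx ss' mid; rewrite bD => /ltnW.
by move: pa pb; rewrite ss'; lia.
Qed.

Lemma sortable_arc_inv x a b : sortable x -> a < b -> pos x b < pos x a ->
  arc_inv D x a b.
Proof.
move=> sx; have [d] := ubnP (pos x a - pos x b).
elim: d a b => // d IHd a b gap_lt ab pba.
(* c is the entry right after b in x: each placement of c relative to a and b
   reduces the claim to a closer pair or to an adjacent descent. *)
have s'_lt : (pos x b).+1 < n by have := ltn_ord (pos x a); lia.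
pose s' := Ordinal s'_lt; have ss' : s' = (pos x b).+1 :> nat by [].
have [c xc] : exists c, x s' = c by exists (x s').
have pc : pos x c = s' by rewrite -xc pos_permK.
have sorted_at := sortable_between sx ss'; rewrite posK xc in sorted_at.
have adj : c < b -> arc_inv D x c b.
  by have := sortable_adj_arc sx ss'; rewrite posK xc; apply.
have IHc : a < c -> arc_inv D x a c.
  move=> ac; have pa : pos x a != s' by rewrite pos_eqE xc ord_eqE neq_ltn ac.
  by apply: IHd => //; move: pa; rewrite pc ord_eqE /=; lia.
case: (ltngtP c b) => [cb | bc | /val_inj cb].
- case: (ltngtP c a) => [ca | ac | /val_inj <-]; last exact: adj.
  + have aU : a \notin D.
      by have := sorted_at a; rewrite ca ab => /(_ isT); case: (a \in D) => //; lia.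
    exact: arc_inv_shrink_left ca ab aU (adj cb).
  + exact: arc_inv_trans ac cb (IHc ac) (adj cb).
- have pbc : pos x b < pos x c by rewrite pc ss'.
  exact: arc_inv_shrink_right ab bc pbc (IHc (ltn_trans ab bc)).
- by move: pc; rewrite cb => /eqP; rewrite ord_eqE ss'; lia.
Qed.

Lemma sortable_invE x a b : sortable x -> a < b ->
  (pos x b < pos x a) = arc_inv D x a b.
Proof.
move=> sx ab; apply/idP/idP; first exact: sortable_arc_inv.
exact: arc_inv_ends.
Qed.

Lemma sortable_inj x y : sortable x -> sortable y ->
  (forall i j, i < j -> arc_inv D x i j = arc_inv D y i j) -> x = y.
Proof.
move=> sx sy arcE; apply: inv_set_inj; apply/setP => -[a b]; rewrite !inv_setP.
by case: (ltnP a b) => //= ab; rewrite !sortable_invE ?arcE.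
Qed.

End Contraction.

Section Congruence.
Variables (n : nat) (D : {set 'I_n}).
Implicit Types (x y m : {perm 'I_n}) (i j : 'I_n).

Lemma eta_arc_invP x y :
  eta D x = eta D y <-> forall i j, i < j -> arc_inv D x i j = arc_inv D y i j.
Proof.
split=> [exy i j ij | arcE]; first exact: arc_inv_eta.
have [x0 sx0 ex0] := exists_sortable D x; have [y0 sy0 ey0] := exists_sortable D y.
have x0y0 : x0 = y0.
  apply: (sortable_inj sx0 sy0) => i j ij.
  by rewrite (arc_inv_eta ij ex0) (arc_inv_eta ij ey0) arcE.
by rewrite -ex0 -ey0 x0y0.
Qed.

Lemma eta_meet x1 x2 y1 y2 m1 m2 : eta D x1 = eta D y1 -> eta D x2 = eta D y2 ->
  is_meet (@weak_le n) x1 x2 m1 -> is_meet (@weak_le n) y1 y2 m2 -> eta D m1 = eta D m2.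
Proof.
move=> /eta_arc_invP e1 /eta_arc_invP e2 meet1 meet2; apply/eta_arc_invP => i j ij.
by rewrite (arc_inv_meet D ij meet1) (arc_inv_meet D ij meet2) e1 ?e2.
Qed.

End Congruence.

Section Reversal.
Variable n : nat.
Implicit Types (x y z : {perm 'I_n}) (a b : 'I_n).

Lemma perm_rev_ord_inj x : injective (x \o @rev_ord n).
Proof. by move=> i j /perm_inj /rev_ord_inj. Qed.

Definition revp x := perm (@perm_rev_ord_inj x).

Lemma pos_revp x a : pos (revp x) a = rev_ord (pos x a).
Proof. by apply: (@perm_inj _ (revp x)); rewrite posK permE /= rev_ordK posK. Qed.

Lemma revpK : involutive revp.
Proof. by move=> x; apply/permP => i; rewrite !permE /= permE /= rev_ordK. Qed.

Lemma inv_revp x a b : a < b ->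
  (pos (revp x) b < pos (revp x) a) = ~~ (pos x b < pos x a).
Proof.
move=> ab; have pab : pos x a != pos x b :> nat.
  by rewrite -ord_eqE (inj_eq (@pos_inj _ x)) ord_eqE ltn_eqF.
rewrite !pos_revp /=; move: pab; have := ltn_ord (pos x a); have := ltn_ord (pos x b).
lia.
Qed.

Lemma weak_le_revp x y : weak_le x y = weak_le (revp y) (revp x).
Proof.
apply/weak_leP/weak_leP => le_xy a b ab.
  by rewrite !inv_revp //; apply: contra; apply: le_xy.
by apply: contraLR; rewrite -!inv_revp //; apply: le_xy.
Qed.

Lemma is_join_revp x y j :
  is_join (@weak_le n) x y j -> is_meet (@weak_le n) (revp x) (revp y) (revp j).
Proof.
rewrite /is_join /is_meet -!weak_le_revp => -[xj [yj j_min]]; do !split => //.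
by move=> z zx zy; rewrite -[z]revpK -weak_le_revp j_min // weak_le_revp revpK.
Qed.

Lemma lam_revp (D : {set 'I_n}) x t : t <= n ->
  lam (~: D) (revp x) t = lam D x (n - t).
Proof.
move=> tn; apply: eq_lam => k; rewrite /on_lam pos_revp inE /=.
by have := ltn_ord (pos x k); case: (k \in D) => /=; lia.
Qed.

Lemma eta_revp (D : {set 'I_n}) x : eta (~: D) (revp x) = eta D x.
Proof.
have diagE : is_diagonal (~: D) =1 is_diagonal D.
  by move=> p; rewrite /is_diagonal /polygon_edge orbC /upper_chain /U setCK.
apply/setP => p; rewrite !inE diagE; congr (_ && _).
have rev_val (t : 'I_n.+1) : rev_ord t = n - t :> nat by rewrite /= subSS.
apply/existsP/existsP => -[t e_t]; exists (rev_ord t); have t_le : t <= n by rewrite -ltnS.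
  by rewrite rev_val -lam_revp.
by rewrite lam_revp rev_val ?subKn ?leq_subr.
Qed.

End Reversal.


Theorem theorem5p1 (n : nat) (D : {set 'I_n}) :
  lattice_congruence (@weak_le n) (fun x y => eta D x = eta D y).
Proof.
split=> [// | x y -> // | x y z -> -> // | | x1 x2 y1 y2 j1 j2 e1 e2 join1 join2].
  exact: eta_meet.
rewrite -(eta_revp D j1) -(eta_revp D j2).
by apply: (eta_meet _ _ (is_join_revp join1) (is_join_revp join2)); rewrite !eta_revp.
Qed.
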